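(* Let $m,n\ge 1$ and let $A\in\mathbb{R}^{m\times n}$ with rows $a_1,\dots,a_m$ maximize $\beta(A)$ among all $m\times n$ real matrices whose rows all have Euclidean norm $1$. For $i=1,\dots,m$ let $$W_i=\{x\in\{-1,1\}^n : \|Ax\|_\infty = a_i^\top x\}.$$ Then for every $i$ with $\sum_{x\in W_i}x\neq 0$, $$a_i=\frac{\sum_{x\in W_i}x}{\left\|\sum_{x\in W_i}x\right\|_2}.$$
   Context: For $A\in\mathbb{R}^{m\times n}$, $\beta(A)=\frac{1}{2^n}\sum_{x\in\{-1,1\}^n}\|Ax\|_\infty$. The maximum exists by compactness. *)

From HB Require Import structures.
From mathcomp Require Import all_boot all_order all_algebra.
From mathcomp Require Import reals.
Set Implicit Arguments. Unset Strict Implicit. Unset Printing Implicit Defensive.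
Import Order.TTheory GRing.Theory Num.Theory.
Local Open Scope ring_scope.

(* Sign vectors x in {-1,1}^n are encoded by s : {ffun 'I_n -> bool}
   (bijectively), via the column vector below. *)
Definition sgnvec (R : realType) (n : nat) (s : {ffun 'I_n -> bool}) : 'cV[R]_n :=
  \col_j (if s j then 1 else -1).

Definition infnorm (R : realType) (m : nat) (v : 'cV[R]_m) : R :=
  \big[Num.max/0]_(i < m) `|v i 0|.

Definition norm2 (R : realType) (n : nat) (v : 'cV[R]_n) : R :=
  Num.sqrt (\sum_(j < n) v j 0 ^+ 2).

Definition beta (R : realType) (m n : nat) (A : 'M[R]_(m, n)) : R :=
  (2 ^+ n)^-1 * \sum_(s : {ffun 'I_n -> bool}) infnorm (A *m sgnvec R s).

Definition unit_rows (R : realType) (m n : nat) (A : 'M[R]_(m, n)) : Prop :=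
  forall i : 'I_m, norm2 (row i A)^T = 1.

Definition W (R : realType) (m n : nat) (A : 'M[R]_(m, n)) (i : 'I_m)
  : {set {ffun 'I_n -> bool}} :=
  [set s | infnorm (A *m sgnvec R s) == (row i A *m sgnvec R s) 0 0].

(* Replace the row a_i of the maximiser by the unit vector u = S / |S|.  For x
   in W_i the sup norm grows by at least (u - a_i)^T x, for -x in W_i it grows
   by at least -(u - a_i)^T x, and otherwise a_i x is not the extreme coordinate
   and the sup norm cannot decrease.  Summing over x, the terms of x and -x
   together give 2 (u - a_i)^T S <= 2^n (beta B - beta A) <= 0, i.e.
   |S| <= a_i^T S.  Unit vectors with inner product at least 1 coincide. *)
From HB Require Import structures.
From mathcomp Require Import all_boot all_order all_algebra.
From mathcomp Require Import reals.
From mathcomp Require Import lra.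
Import Order.TTheory GRing.Theory Num.Theory.
Local Open Scope ring_scope.
Set Implicit Arguments. Unset Strict Implicit.

Section Norms.
Variable R : realType.

Lemma sqr_norm2 n (v : 'cV[R]_n) : norm2 v ^+ 2 = \sum_j v j 0 ^+ 2.
Proof. by rewrite sqr_sqrtr // sumr_ge0 // => j _; exact: sqr_ge0. Qed.

Lemma dot_self n (v : 'cV[R]_n) : (v^T *m v) 0 0 = norm2 v ^+ 2.
Proof. by rewrite sqr_norm2 mxE; apply: eq_bigr => j _; rewrite mxE expr2. Qed.

Lemma norm2_eq0 n (v : 'cV[R]_n) : (norm2 v == 0) = (v == 0).
Proof.
apply/idP/eqP => [|->].
  rewrite -sqrf_eq0 sqr_norm2 psumr_eq0 => [/allP v0|j _]; last exact: sqr_ge0.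
  apply/matrixP => j k; rewrite ord1 mxE.
  by apply/eqP; rewrite -sqrf_eq0; apply: v0; rewrite mem_index_enum.
by rewrite /norm2 big1 ?sqrtr0 // => j _; rewrite mxE expr0n.
Qed.

Lemma norm2Z n c (v : 'cV[R]_n) : norm2 (c *: v) = `|c| * norm2 v.
Proof.
rewrite /norm2 -sqrtr_sqr -sqrtrM ?sqr_ge0 // mulr_sumr.
by congr Num.sqrt; apply: eq_bigr => j _; rewrite mxE exprMn.
Qed.

Lemma norm2_normalize n (v : 'cV[R]_n) : v != 0 -> norm2 ((norm2 v)^-1 *: v) = 1.
Proof.
rewrite -norm2_eq0 => v0; rewrite norm2Z ger0_norm ?mulVf //.
by rewrite invr_ge0 sqrtr_ge0.
Qed.

Lemma unit_cV_eq n (a u : 'cV[R]_n) :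
  norm2 a = 1 -> norm2 u = 1 -> 1 <= (a^T *m u) 0 0 -> a = u.
Proof.
move=> a1 u1 au; apply/eqP; rewrite -subr_eq0 -norm2_eq0 -sqrf_eq0.
have ua : (u^T *m a) 0 0 = (a^T *m u) 0 0.
  by rewrite -[u^T *m a]trmxK trmx_mul trmxK mxE.
have expand : norm2 (a - u) ^+ 2 = 2 - 2 * (a^T *m u) 0 0.
  rewrite -dot_self !linearB /= !mulmxBl.
  do !rewrite [(_ + _ : 'M[R]_(_, _)) _ _]mxE [(- _ : 'M[R]_(_, _)) _ _]mxE.
  rewrite ua !dot_self a1 u1 expr1n; lra.
rewrite eq_le sqr_ge0 andbT expand; lra.
Qed.

Lemma infnorm_ge0 m (v : 'cV[R]_m) : 0 <= infnorm v.
Proof. by apply: (big_ind (fun x => 0 <= x)) => // x y x0 y0; rewrite le_max x0. Qed.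

Lemma ler_infnorm m (v : 'cV[R]_m) k : `|v k 0| <= infnorm v.
Proof. by rewrite /infnorm (bigD1 k) //= le_max lexx. Qed.

Lemma infnorm_attained m (v : 'cV[R]_m) (k0 : 'I_m) : exists k, infnorm v = `|v k 0|.
Proof.
have [k _ e] := eq_bigmax (x := 0) k0 xpredT (fun k => `|v k 0|) isT
  (fun k _ => normr_ge0 _).
by exists k.
Qed.

Lemma infnormN m (v : 'cV[R]_m) : infnorm (- v) = infnorm v.
Proof. by apply: eq_bigr => k _; rewrite mxE normrN. Qed.

Section OneCoordinate.
Variables (m : nat) (v w : 'cV[R]_m) (i : 'I_m).
Hypothesis vw : forall k, k != i -> w k 0 = v k 0.

Lemma infnorm_subr_ge_at :
  infnorm v = v i 0 -> w i 0 - v i 0 <= infnorm w - infnorm v.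
Proof. by move->; rewrite lerD2r (le_trans (ler_norm _) (ler_infnorm _ _)). Qed.

Lemma infnorm_le_off : `|v i 0| < infnorm v -> infnorm v <= infnorm w.
Proof.
have [k ->] := infnorm_attained v i => vik.
have ki : k != i by apply: contraTneq vik => ->; rewrite ltxx.
by rewrite -vw // ler_infnorm.
Qed.

(* The two indicator terms are the contributions of x and of -x when v = Ax. *)
Lemma infnorm_variation :
  (if infnorm v == v i 0 then w i 0 - v i 0 else 0) +
  (if infnorm v == - v i 0 then v i 0 - w i 0 else 0)
  <= infnorm w - infnorm v.
Proof.
have w0 := infnorm_ge0 w; have wi := ler_infnorm w i.
have [vp|vp] := eqVneq (infnorm v) (v i 0);
  have [vn|vn] := eqVneq (infnorm v) (- v i 0).
- have vi0 : v i 0 = 0 by apply/eqP; rewrite -eqNr -vn vp.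
  by rewrite vp vi0 !subr0 sub0r addrN; have := ler_normr (w i 0); lra.
- by rewrite addr0 infnorm_subr_ge_at.
- have wN := ler_norm (- w i 0); rewrite normrN in wN.
  by rewrite add0r vn opprK; lra.
- rewrite addr0 subr_ge0 infnorm_le_off // lt_def ler_infnorm andbT.
  by case: (ltP (v i 0) 0) => [/ltr0_norm|/ger0_norm] ->.
Qed.

End OneCoordinate.
End Norms.

Definition sgn_flip n (s : {ffun 'I_n -> bool}) : {ffun 'I_n -> bool} :=
  [ffun j => ~~ s j].

Lemma sgn_flip_inj n : injective (@sgn_flip n).
Proof.
by move=> s t /ffunP st; apply/ffunP => j; move: (st j); rewrite !ffunE => /negb_inj.
Qed.

Lemma sgnvec_flip (R : realType) n (s : {ffun 'I_n -> bool}) :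
  sgnvec R (sgn_flip s) = - sgnvec R s.
Proof. by apply/matrixP => j k; rewrite !mxE ffunE; case: (s j); rewrite ?opprK. Qed.

Lemma mulmx_col_entry (R : realType) m n (M : 'M[R]_(m, n)) (x : 'cV[R]_n) k :
  (M *m x) k 0 = (row k M *m x) 0 0.
Proof. by rewrite !mxE; apply: eq_bigr => j _; rewrite mxE. Qed.

Section RowVariation.
Variables (R : realType) (m n : nat) (A B : 'M[R]_(m, n)) (i : 'I_m).
Hypothesis AB : forall k, k != i -> row k B = row k A.

Lemma beta_row_variation :
  2 * ((row i B - row i A) *m \sum_(s in W A i) sgnvec R s) 0 0
  <= 2 ^+ n * (beta B - beta A).
Proof.
pose h s := if s \in W A i
  then (B *m sgnvec R s) i 0 - (A *m sgnvec R s) i 0 else 0.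
have pair_le s : h s + h (sgn_flip s)
    <= infnorm (B *m sgnvec R s) - infnorm (A *m sgnvec R s).
  have vw k : k != i -> (B *m sgnvec R s) k 0 = (A *m sgnvec R s) k 0.
    by move=> ki; rewrite (mulmx_col_entry B) (mulmx_col_entry A) AB.
  have := infnorm_variation vw.
  rewrite /h !inE sgnvec_flip !mulmxN infnormN ![((- _ : 'M[R]_(_, _)) _ _)]mxE.
  by rewrite -!(mulmx_col_entry A) opprK [- _ + _]addrC.
have h_flip : \sum_s h (sgn_flip s) = \sum_s h s.
  by rewrite [RHS](reindex_inj (@sgn_flip_inj n)).
have sum_h : \sum_s h s = ((row i B - row i A) *m \sum_(s in W A i) sgnvec R s) 0 0.
  rewrite mulmx_sumr summxE [RHS]big_mkcond; apply: eq_bigr => s _; rewrite /h.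
  case: ifP => // _; rewrite mulmxBl (mulmx_col_entry B) (mulmx_col_entry A).
  by rewrite [in RHS]mxE [(- _ : 'M[R]_(_, _)) _ _]mxE.
have sum_beta : \sum_s (infnorm (B *m sgnvec R s) - infnorm (A *m sgnvec R s))
    = 2 ^+ n * (beta B - beta A).
  by rewrite /beta -mulrBr mulrA divff ?mul1r ?sumrB // expf_neq0 // pnatr_eq0.
have : \sum_s (h s + h (sgn_flip s))
    <= \sum_s (infnorm (B *m sgnvec R s) - infnorm (A *m sgnvec R s)).
  by apply: ler_sum => s _; exact: pair_le.
by rewrite big_split /= h_flip -mulr2n sum_h sum_beta mulr_natl.
Qed.
End RowVariation.

Theorem theorem1 (R : realType) (m n : nat) (hm : (0 < m)%N) (hn : (0 < n)%N)
  (A : 'M[R]_(m, n)) :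
  unit_rows A ->
  (forall B : 'M[R]_(m, n), unit_rows B -> beta B <= beta A) ->
  forall i : 'I_m,
    let S := \sum_(s in W A i) sgnvec R s in
    S != 0 ->
    (row i A)^T = (norm2 S)^-1 *: S.
Proof.
move=> unitA maxA i S S0; set u := (norm2 S)^-1 *: S.
pose B := \matrix_k (if k == i then u^T else row k A).
have rowB k : row k B = if k == i then u^T else row k A by rewrite rowK.
have unitB : unit_rows B.
  by move=> k; rewrite rowB; case: eqP => _; rewrite ?trmxK ?norm2_normalize.
have offB k : k != i -> row k B = row k A by move=> ki; rewrite rowB (negbTE ki).
have := beta_row_variation offB; rewrite rowB eqxx -/S => var.
have N0 : 0 < norm2 S by rewrite lt_def norm2_eq0 S0 sqrtr_ge0.
have uS : (u^T *m S) 0 0 = norm2 S.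
  by rewrite linearZ /= -scalemxAl mxE dot_self expr2 mulKf ?gt_eqF.
have dir_le0 : ((u^T - row i A) *m S) 0 0 <= 0.
  have p0 : 0 < 2 ^+ n :> R by rewrite exprn_gt0.
  have := maxA B unitB; rewrite -subr_le0 => le0; nra.
have NaS : norm2 S <= (row i A *m S) 0 0.
  move: dir_le0; rewrite mulmxBl [in X in X <= _]mxE.
  by rewrite [(- _ : 'M[R]_(_, _)) _ _]mxE uS subr_le0.
apply: unit_cV_eq (unitA i) (norm2_normalize S0) _.
by rewrite trmxK -scalemxAr mxE ler_pdivlMl // mulr1.
Qed.
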